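(* Every consistent piece-wise quadratic function is semi-consistent.
   Context: A continuous $g$ is piece-wise quadratic with $N$ pieces if there exist breakpoints $-\infty=\tau_0<\tau_1<\dots<\tau_N=+\infty$ and quadratic $p_1,\dots,p_N$ with $g=p_k$ on $[\tau_{k-1},\tau_k]$ and $p_k\ne p_{k+1}$ as functions; it is consistent if every $p_k$ is strongly convex and $g=\min_kp_k$ on $\mathbb{R}$. For piece-wise quadratic $h$ with strongly convex pieces and breakpoints $\tau_k$, the indexing function is $I_h(\beta)=\min\{k:\ \exists\,\alpha^\star\in\arg\max_\alpha\{\beta\alpha-h(\alpha)\}\text{ with }\tau_{k-1}\le\alpha^\star\le\tau_k\}$. A piece-wise quadratic $g$ with breakpoints $\tau_0,\dots,\tau_N$ and pieces $p_1,\dots,p_N$ is semi-consistent if: (i) $p_1,\dots,p_N$ are strongly convex; (ii) $p_k(\alpha)\le\min\{p_{k-1}(\alpha),p_{k+1}(\alpha)\}$ for all $\alpha\in[\tau_{k-1},\tau_k]$ and $2\le k\le N-1$; (iii) for every $k\le N$, the indexing function $I_{g_k}$ is non-decreasing, where $g_k(\alpha)=g(\alpha)$ for $\alpha\le\tau_k$ and $g_k(\alpha)=p_k(\alpha)$ for $\alpha>\tau_k$ (so $g_k$ has pieces $p_1,\dots,p_k$ and breakpoints $\tau_0,\dots,\tau_{k-1},+\infty$). *)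

From Stdlib Require Import Reals Lra Lia Arith.
Open Scope R_scope.

Record quad := Quad { qa : R; qb : R; qc : R }.

Definition qeval (p : quad) (x : R) : R := qa p * x ^ 2 + qb p * x + qc p.

Definition strongly_convex (p : quad) : Prop := 0 < qa p.

(* With N pieces and breakpoints tau_1 < ... < tau_{N-1}
   (tau_0 = -oo, tau_N = +oo implicit), x lies in the closed piece k,
   i.e. tau_{k-1} <= x <= tau_k, for 1 <= k <= N. *)
Definition in_piece (N : nat) (tau : nat -> R) (k : nat) (x : R) : Prop :=
  (1 <= k <= N)%nat /\
  (k = 1%nat \/ tau (k - 1)%nat <= x) /\
  (k = N \/ x <= tau k).

Definition piecewise_quadratic (N : nat) (tau : nat -> R) (p : nat -> quad)
    (g : R -> R) : Prop :=
  (1 <= N)%nat /\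
  (forall k, (1 <= k)%nat -> (k + 1 <= N - 1)%nat -> tau k < tau (k + 1)%nat) /\
  continuity g /\
  (forall k x, in_piece N tau k x -> g x = qeval (p k) x) /\
  (forall k, (1 <= k)%nat -> (k + 1 <= N)%nat ->
     ~ (forall x, qeval (p k) x = qeval (p (k + 1)%nat) x)).

Definition consistent (N : nat) (tau : nat -> R) (p : nat -> quad)
    (g : R -> R) : Prop :=
  piecewise_quadratic N tau p g /\
  (forall k, (1 <= k <= N)%nat -> strongly_convex (p k)) /\
  (forall x, (forall k, (1 <= k <= N)%nat -> g x <= qeval (p k) x) /\
             exists k, (1 <= k <= N)%nat /\ g x = qeval (p k) x).

Definition is_argmax_conj (h : R -> R) (beta a : R) : Prop :=
  forall x, beta * x - h x <= beta * a - h a.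

(* index_of N tau h beta k  <->  I_h(beta) = k, i.e. k is the minimum of
   { k : exists alpha* in argmax_alpha (beta alpha - h alpha)
          with tau_{k-1} <= alpha* <= tau_k }. *)
Definition index_of (N : nat) (tau : nat -> R) (h : R -> R) (beta : R)
    (k : nat) : Prop :=
  (exists a, is_argmax_conj h beta a /\ in_piece N tau k a) /\
  (forall j, (exists a, is_argmax_conj h beta a /\ in_piece N tau j a) ->
     (k <= j)%nat).

Definition index_nondecreasing (N : nat) (tau : nat -> R) (h : R -> R) : Prop :=
  forall beta1 beta2 k1 k2, beta1 <= beta2 ->
    index_of N tau h beta1 k1 -> index_of N tau h beta2 k2 -> (k1 <= k2)%nat.

(* g_k: equal to g on alpha <= tau_k and to p_k on alpha > tau_k
   (for k = N, tau_N = +oo and g_N = g). *)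
Definition gk (N : nat) (tau : nat -> R) (p : nat -> quad) (g : R -> R)
    (k : nat) (x : R) : R :=
  if Nat.ltb k N then (if Rle_dec x (tau k) then g x else qeval (p k) x)
  else g x.

Definition semi_consistent (N : nat) (tau : nat -> R) (p : nat -> quad)
    (g : R -> R) : Prop :=
  piecewise_quadratic N tau p g /\
  (forall k, (1 <= k <= N)%nat -> strongly_convex (p k)) /\
  (forall k x, (2 <= k <= N - 1)%nat -> tau (k - 1)%nat <= x <= tau k ->
     qeval (p k) x <= Rmin (qeval (p (k - 1)%nat) x) (qeval (p (k + 1)%nat) x)) /\
  (* (iii): g_k has pieces p_1..p_k and breakpoints tau_1..tau_{k-1}, +oo *)
  (forall k, (1 <= k <= N)%nat -> index_nondecreasing k tau (gk N tau p g k)).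

(* Condition (ii) is immediate: on its own piece g = p_k, and g is the minimum
   of all pieces.  Condition (iii) holds for every function h whatsoever:
   adding the optimality inequalities of a maximizer a1 at beta1 and a2 at
   beta2 gives (beta2 - beta1)(a2 - a1) >= 0, so maximizers move to the right
   as beta grows, and a point left of a maximizer lying in piece k lies in
   some piece j <= k. *)

From Stdlib Require Import Reals Lra Lia.
Open Scope R_scope.

Lemma argmax_conj_monotone (h : R -> R) (b1 b2 a1 a2 : R) :
  b1 < b2 -> is_argmax_conj h b1 a1 -> is_argmax_conj h b2 a2 -> a1 <= a2.
Proof.
  intros Hb H1 H2.
  specialize (H1 a2). specialize (H2 a1).
  destruct (Rle_dec a1 a2) as [Hle|Hgt]; [exact Hle|].
  assert (Hprod : (b2 - b1) * (a2 - a1) >= 0) by lra.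
  nra.
Qed.

Lemma in_piece_le_bound (K : nat) (tau : nat -> R) (a : R) :
  forall m, (1 <= m <= K)%nat -> (m = K \/ a <= tau m) ->
  exists j, (j <= m)%nat /\ in_piece K tau j a.
Proof.
  induction m as [|m IH]; intros Hm Hu; [lia|].
  destruct (Nat.eq_dec m 0) as [->|Hm0].
  - exists 1%nat; split; [lia|]. repeat split; auto; lia.
  - destruct (Rle_dec a (tau m)) as [Hle|Hgt].
    + destruct (IH ltac:(lia) (or_intror Hle)) as [j [Hj Hp]].
      exists j; split; [lia|exact Hp].
    + exists (S m); split; [lia|]. repeat split; try lia.
      * right. replace (S m - 1)%nat with m by lia. lra.
      * exact Hu.
Qed.

Lemma in_piece_le (K : nat) (tau : nat -> R) (k : nat) (a1 a2 : R) :
  in_piece K tau k a2 -> a1 <= a2 ->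
  exists j, (j <= k)%nat /\ in_piece K tau j a1.
Proof.
  intros [Hk [_ Hu]] Ha.
  apply in_piece_le_bound; [exact Hk|].
  destruct Hu as [Hu|Hu]; [left; exact Hu | right; lra].
Qed.

Lemma index_nondecreasing_all (K : nat) (tau : nat -> R) (h : R -> R) :
  index_nondecreasing K tau h.
Proof.
  intros b1 b2 k1 k2 Hb [[a1 [H1 P1]] M1] [[a2 [H2 P2]] _].
  destruct (Req_dec b1 b2) as [<-|Hne].
  - apply M1. exists a2; split; assumption.
  - assert (Ha : a1 <= a2) by (apply (argmax_conj_monotone h b1 b2); [lra | exact H1 | exact H2]).
    destruct (in_piece_le K tau k2 a1 a2 P2 Ha) as [j [Hj Pj]].
    assert (k1 <= j)%nat by (apply M1; exists a1; split; assumption).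
    lia.
Qed.

Lemma consistent_piece_le_neighbours (N : nat) (tau : nat -> R) (p : nat -> quad)
    (g : R -> R) (k : nat) (x : R) :
  consistent N tau p g -> (2 <= k <= N - 1)%nat -> tau (k - 1)%nat <= x <= tau k ->
  qeval (p k) x <= Rmin (qeval (p (k - 1)%nat) x) (qeval (p (k + 1)%nat) x).
Proof.
  intros [[_ [_ [_ [Hg _]]]] [_ Hmin]] Hk Hx.
  assert (Hgx : g x = qeval (p k) x).
  { apply Hg. repeat split; try lia; right; lra. }
  destruct (Hmin x) as [Hle _].
  apply Rmin_glb; rewrite <- Hgx; apply Hle; lia.
Qed.

Theorem lemma8 (N : nat) (tau : nat -> R) (p : nat -> quad) (g : R -> R) :
  consistent N tau p g -> semi_consistent N tau p g.
Proof.
  intros Hcons.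
  pose proof Hcons as [Hpw [Hsc _]].
  split; [exact Hpw|]. split; [exact Hsc|]. split.
  - intros k x Hk Hx. exact (consistent_piece_le_neighbours N tau p g k x Hcons Hk Hx).
  - intros k _. apply index_nondecreasing_all.
Qed.
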